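(* For every real constant $c>0$, the function $$L_c(\alpha,\mathbf p)\;=\;-c\,\log \sum_{\mathbf x\models\alpha}\ \prod_{i:\,\mathbf x\models X_i}\mathbf p_i\prod_{i:\,\mathbf x\models\neg X_i}(1-\mathbf p_i)$$ (where the sum ranges over all states $\mathbf x\in\{0,1\}^V$ satisfying $\alpha$, $V$ being the index set of $\mathbf p$) satisfies all of the axioms (A1)–(A8) listed in the context. Conversely, every function $L$ satisfying all of the axioms (A1)–(A8) is equal to $L_c$ for some constant $c>0$. In other words, the semantic loss is the unique function satisfying (A1)–(A8), up to a positive multiplicative constant.
   Context: Setting: For a finite set $V$ of Boolean variables, a sentence over $V$ is a propositional formula built from variables in $V$ with the usual connectives; $\mathit{true}$ denotes the constant true sentence. A state $\mathbf x$ is an assignment in $\{0,1\}^V$; it is identified both with the sentence that is the conjunction of the literals it makes true, and with the vector $\mathbf x\in\{0,1\}^V\subseteq[0,1]^V$. We write $\mathbf x\models\alpha$ if $\mathbf x$ satisfies $\alpha$, $\alpha\models\beta$ if every state satisfying $\alpha$ satisfies $\beta$, and $\alpha\equiv\beta$ if both $\alpha\models\beta$ and $\beta\models\alpha$. A loss function $L$ assigns to every finite variable set $V$, every vector $\mathbf p\in[0,1]^V$ (where $\mathbf p_i$ is the probability of variable $X_i$) and every sentence $\alpha$ whose variables lie in $V$ a value $L(\alpha,\mathbf p)\in\mathbb R\cup\{+\infty\}$. Logarithms are natural, with $-\log 0=+\infty$ and $K^{-\infty}=0$. If $\mathbf p\in[0,1]^X$ and $\mathbf q\in[0,1]^Y$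 with $X,Y$ disjoint, $[\mathbf p\,\mathbf q]\in[0,1]^{X\cup Y}$ is their concatenation. Axioms: (A1) Truth: $L(\mathit{true},\mathbf p)=0$ for all $\mathbf p$. (A2) Additive independence: if $\alpha$ is a sentence over $X$, $\beta$ a sentence over $Y$ with $X\cap Y=\emptyset$, $\mathbf p\in[0,1]^X$, $\mathbf q\in[0,1]^Y$, then $L(\alpha\wedge\beta,[\mathbf p\,\mathbf q])=L(\alpha,\mathbf p)+L(\beta,\mathbf q)$. (A3) Monotonicity: if $\alpha\models\beta$ then $L(\alpha,\mathbf p)\ge L(\beta,\mathbf p)$ for all $\mathbf p$. (A4) Identity: for every state $\mathbf x$, $L(\mathbf x,\mathbf x)=0$ (sentence vs. deterministic vector). (A5) Label-literal correspondence: for each variable $X$ there are real constants $K,K'$ such that for every $p\in[0,1]$ (a vector over $\{X\}$), $L(X,p)=-K\log p$ and $L(\neg X,p)=-K'\log(1-p)$. (A6) Value symmetry: $L(\alpha,\mathbf p)=L(\bar\alpha,\mathbf 1-\mathbf p)$, where $\bar\alpha$ replaces every variable in $\alpha$ by its negation and $\mathbf 1-\mathbf p$ is taken componentwise. (A7) Variable symmetry: for a permutation $\pi$ of the variable set $V$ of $\mathbf p$, $L(\alpha,\mathbf p)=L(\pi(\alpha),\pi(\mathbf p))$, where $\pi(\alpha)$ renames each variable $X$ to $\pi(X)$ and $\pi(\mathbf p)$ is the correspondingly permuted vector. (A8) Exponential additivity: there is a constant $K>0$ such that for all $\mathbf p$ and all sentences $\alpha,\beta$ with $\alpha\wedge\beta$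 unsatisfiable, $K^{-L(\alpha\vee\beta,\mathbf p)}=K^{-L(\alpha,\mathbf p)}+K^{-L(\beta,\mathbf p)}$. *)

From HB Require Import structures.
From mathcomp Require Import all_boot all_order all_algebra.
From mathcomp Require Import finmap.
From mathcomp Require Import all_classical all_reals all_analysis.

Set Implicit Arguments.
Unset Strict Implicit.
Unset Printing Implicit Defensive.

Import Order.TTheory GRing.Theory Num.Theory.
Local Open Scope ring_scope.

Inductive form : Type :=
  | Var : nat -> form
  | Tru : form
  | Fls : form
  | Neg : form -> form
  | And : form -> form -> form
  | Or  : form -> form -> form
  | Imp : form -> form -> form.

Fixpoint eval (x : nat -> bool) (f : form) : bool :=
  match f with
  | Var i => x i
  | Tru => true
  | Fls => false
  | Neg g => ~~ eval x g
  | And g h => eval x g && eval x h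
  | Or g h => eval x g || eval x h
  | Imp g h => eval x g ==> eval x h
  end.

Fixpoint vars (f : form) : seq nat :=
  match f with
  | Var i => [:: i]
  | Tru | Fls => [::]
  | Neg g => vars g
  | And g h | Or g h | Imp g h => vars g ++ vars h
  end.

Definition over (V : {fset nat}) (f : form) : Prop :=
  forall i, i \in vars f -> i \in V.

Definition entails (a b : form) : Prop := forall x : nat -> bool, eval x a -> eval x b.

Fixpoint negvars (f : form) : form :=
  match f with
  | Var i => Neg (Var i)
  | Tru => Tru
  | Fls => Fls
  | Neg g => Neg (negvars g)
  | And g h => And (negvars g) (negvars h)
  | Or g h => Or (negvars g) (negvars h)
  | Imp g h => Imp (negvars g) (negvars h)
  end.

Fixpoint rename (pi : nat -> nat) (f : form) : form :=
  match f with
  | Var i => Var (pi i)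
  | Tru => Tru
  | Fls => Fls
  | Neg g => Neg (rename pi g)
  | And g h => And (rename pi g) (rename pi h)
  | Or g h => Or (rename pi g) (rename pi h)
  | Imp g h => Imp (rename pi g) (rename pi h)
  end.

Definition state_sent (V : {fset nat}) (x : nat -> bool) : form :=
  foldr (fun i acc => And (if x i then Var i else Neg (Var i)) acc) Tru
        (enum_fset V).

Definition state_vec (R : realType) (x : nat -> bool) : nat -> R :=
  fun i => if x i then 1 else 0.

Section Loss.
Variable R : realType.

(* A vector p in [0,1]^V is modelled by a function nat -> R whose values on V
   lie in [0,1]; values outside V are irrelevant (see locality below). *)
Definition unit_vec (V : {fset nat}) (p : nat -> R) : Prop :=
  forall i, i \in V -> 0 <= p i <= 1.

Definition valid (V : {fset nat}) (a : form) (p : nat -> R) : Prop :=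
  over V a /\ unit_vec V p.

Definition lossT := {fset nat} -> form -> (nat -> R) -> \bar R.

Local Open Scope ereal_scope.

(* -log r, with -log 0 = +oo *)
Definition nlog (r : R) : \bar R := if r == 0%R then +oo else (- ln r)%:E.

(* K^(-l), with K^(-oo) = 0 *)
Definition epow (K : R) (l : \bar R) : R :=
  match l with
  | EFin r => (K `^ (- r))%R
  | _ => 0%R
  end.

Definition is_loss (L : lossT) : Prop :=
  (forall V a p, valid V a p -> L V a p != -oo) /\
  (forall V a p q, valid V a p -> unit_vec V q ->
     (forall i, i \in V -> p i = q i) -> L V a p = L V a q).

Definition A1 (L : lossT) : Prop :=
  forall V p, unit_vec V p -> L V Tru p = 0.

Definition A2 (L : lossT) : Prop :=
  forall (X Y : {fset nat}) a b p q,
    [disjoint X & Y]%fset -> valid X a p -> valid Y b q ->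
    L (X `|` Y)%fset (And a b) (fun i => if i \in X then p i else q i)
    = L X a p + L Y b q.

Definition A3 (L : lossT) : Prop :=
  forall V a b p, valid V a p -> over V b -> entails a b -> L V b p <= L V a p.

Definition A4 (L : lossT) : Prop :=
  forall V (x : nat -> bool), L V (state_sent V x) (state_vec R x) = 0.

Definition A5 (L : lossT) : Prop :=
  forall X : nat, exists K K' : R, forall p : nat -> R, (0 <= p X <= 1)%R ->
    L [fset X]%fset (Var X) p = K%:E * nlog (p X) /\
    L [fset X]%fset (Neg (Var X)) p = K'%:E * nlog (1 - p X)%R.

Definition A6 (L : lossT) : Prop :=
  forall V a p, valid V a p -> L V a p = L V (negvars a) (fun i => 1 - p i)%R.

(* pi is a permutation of V with inverse sigma; pi(p) = p o sigma,
   i.e. pi(p)_{pi X} = p_X. *)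
Definition A7 (L : lossT) : Prop :=
  forall V a p (pi sigma : nat -> nat),
    (forall i, i \in V -> pi i \in V) -> (forall i, i \in V -> sigma i \in V) ->
    (forall i, i \in V -> sigma (pi i) = i) -> (forall i, i \in V -> pi (sigma i) = i) ->
    valid V a p -> L V a p = L V (rename pi a) (fun j => p (sigma j)).

Definition A8 (L : lossT) : Prop :=
  exists K : R, (0 < K)%R /\
    forall V a b p, valid V a p -> over V b ->
      (forall x : nat -> bool, ~~ (eval x a && eval x b)) ->
      epow K (L V (Or a b) p) = (epow K (L V a p) + epow K (L V b p))%R.

Definition axioms (L : lossT) : Prop :=
  A1 L /\ A2 L /\ A3 L /\ A4 L /\ A5 L /\ A6 L /\ A7 L /\ A8 L.

(* The semantic loss L_c: states x in {0,1}^V are encoded by the subset S of V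
   of variables they make true. *)
Definition wmc (V : {fset nat}) (a : form) (p : nat -> R) : R :=
  (\sum_(S <- fpowerset V | eval (fun i => i \in S) a)
     ((\prod_(i <- V | i \in S) p i) * (\prod_(i <- V | i \notin S) (1 - p i))))%R.

Definition Lsem (c : R) : lossT := fun V a p => c%:E * nlog (wmc V a p).

End Loss.

From Pilot Require Import Defs.
From HB Require Import structures.
From mathcomp Require Import all_boot all_order all_algebra.
From mathcomp Require Import finmap.
From mathcomp Require Import all_classical all_reals all_analysis.
From mathcomp Require Import ring lra.
Import Order.TTheory GRing.Theory Num.Theory.
Import Defs.

Set Implicit Arguments.
Unset Strict Implicit.
Unset Printing Implicit Defensive.

Local Open Scope ring_scope.

(* The weighted model count [wmc V a p] is the probability of [a] under the
   product distribution with marginals [p]; it is multiplicative over disjoint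
   variable sets, additive over incompatible sentences, monotone, and invariant
   under flipping or renaming variables. Taking [-c log] of it gives (A1)-(A8),
   with base [K = e^(1/c)] in (A8).

   Conversely, let [L] satisfy the axioms with base [K] and put
   [w a := K^(-L(a, p))]. By (A2) the weight of a state is the product of the
   weights of its literals, and by (A8) the weight of [a] is the sum of the
   weights of its models (every [a] is equivalent to its full DNF, by (A3)).
   By (A5) a literal has weight [K^(c log p) = p^(c ln K)]; so [w] is the
   weighted model count, i.e. [L = L_c], as soon as [c ln K = 1] for the
   constant [c] of (A5). *)

Local Notation ind S := (fun i : nat => i \in (S : {fset nat})).

(** * Sentences, states and normal forms *)

Lemma eval_ext (x y : nat -> bool) (a : form) :
  {in vars a, x =1 y} -> eval x a = eval y a.
Proof.
elim: a => //= [i|g IH|g IHg h IHh|g IHg h IHh|g IHg h IHh] xy.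
- by apply: xy; rewrite inE.
- by rewrite IH.
all: by rewrite IHg ?IHh // => i vi; apply: xy; rewrite mem_cat vi ?orbT.
Qed.

Lemma eval_over V (x y : nat -> bool) (a : form) :
  over V a -> {in V, x =1 y} -> eval x a = eval y a.
Proof. by move=> oa xy; apply: eval_ext => i /oa; apply: xy. Qed.

Lemma eval_negvars x a : eval x (negvars a) = eval (fun i => ~~ x i) a.
Proof. by elim: a => //= [g ->|g -> h ->|g -> h ->|g -> h ->]. Qed.

Lemma eval_rename x pi a : eval x (rename pi a) = eval (x \o pi) a.
Proof. by elim: a => //= [g ->|g -> h ->|g -> h ->|g -> h ->]. Qed.

Definition conj_literals (l : seq nat) (x : nat -> bool) : form :=
  foldr (fun i acc => And (if x i then Var i else Neg (Var i)) acc) Tru l.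

Lemma state_sentE V x : state_sent V x = conj_literals (enum_fset V) x.
Proof. by []. Qed.

Lemma eval_conj_literals y l x :
  eval y (conj_literals l x) = all (fun i => y i == x i) l.
Proof.
by elim: l => //= i l ->; congr (_ && _); case: (x i) => /=; case: (y i).
Qed.

Lemma vars_conj_literals l x : {subset vars (conj_literals l x) <= l}.
Proof.
elim: l => //= j l IH i; rewrite mem_cat inE.
by case/orP => [|/IH ->]; [case: (x j) => /=; rewrite inE => -> | rewrite orbT].
Qed.

Lemma eq_in_conj_literals l x y : {in l, x =1 y} ->
  conj_literals l x = conj_literals l y.
Proof.
elim: l => //= i l IH xy; rewrite xy ?mem_head // IH // => j jl.
by apply: xy; rewrite inE jl orbT.
Qed.

Lemma eval_state_sent_self V x : eval x (state_sent V x).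
Proof. by rewrite state_sentE eval_conj_literals; apply/allP => i _. Qed.

Lemma over_state_sent V x : over V (state_sent V x).
Proof. exact: vars_conj_literals. Qed.

Lemma eq_state_sent V S T x : (S `<=` V)%fset -> (T `<=` V)%fset ->
  eval x (state_sent V (ind S)) -> eval x (state_sent V (ind T)) -> S = T.
Proof.
rewrite !state_sentE !eval_conj_literals => /fsubsetP SV /fsubsetP TV.
move=> /allP xS /allP xT.
apply/fsetP => i; have [iV|iNV] := boolP (i \in V).
  by rewrite -(eqP (xS i iV)) (eqP (xT i iV)).
by apply/idP/idP => [/SV|/TV]; rewrite (negbTE iNV).
Qed.

Definition big_or (fs : seq form) : form := foldr Or Fls fs.

Lemma eval_big_or x fs : eval x (big_or fs) = has (eval x) fs.
Proof. by elim: fs => //= f fs ->. Qed.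

Lemma over_big_or_map V (T : Type) (g : T -> form) (s : seq T) :
  (forall t, over V (g t)) -> over V (big_or (map g s)).
Proof.
move=> og; elim: s => [|t s IH] i //=.
by rewrite mem_cat => /orP[/og|/IH].
Qed.

Definition models V a : seq {fset nat} :=
  [seq M <- enum_fset (fpowerset V) | eval (ind M) a].

Definition dnf V a : form := big_or [seq state_sent V (ind M) | M <- models V a].

Lemma over_dnf V a : over V (dnf V a).
Proof. by apply: over_big_or_map => M; apply: over_state_sent. Qed.

Lemma eval_dnf V a x : over V a -> eval x (dnf V a) = eval x a.
Proof.
move=> oa; rewrite /dnf eval_big_or has_map; apply/idP/idP => [/hasP[M]|xa].
  rewrite mem_filter /preim /= state_sentE eval_conj_literals => /andP[Ma _] /allP xM.
  by rewrite (eval_over (y := ind M) oa) // => i /xM /eqP.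
apply/hasP; exists [fset i in V | x i]%fset.
  rewrite mem_filter fpowersetE; apply/andP; split.
    by rewrite -(eval_over (x := x) oa) // => i iV; rewrite !inE iV.
  by apply/fsubsetP => i; rewrite !inE => /andP[].
rewrite /preim /= state_sentE eval_conj_literals.
by apply/allP => i iV; rewrite !inE iV.
Qed.

(** * Finite sets and big operators *)

Lemma big_uniq_bij_in (R : Type) (idx : R) (op : Monoid.com_law idx)
    (T : eqType) (s : seq T) (f : T -> T) (F : T -> R) :
  uniq s -> {in s, forall x, f x \in s} -> {in s &, injective f} ->
  \big[op/idx]_(x <- s) F x = \big[op/idx]_(x <- s) F (f x).
Proof.
move=> us fs finj; rewrite -(big_map f xpredT F); apply: perm_big.
have ufs : uniq (map f s) by rewrite map_inj_in_uniq.
have fss : {subset map f s <= s} by move=> _ /mapP[x xs ->]; apply: fs.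
have [_ sfs] := uniq_min_size ufs fss (eq_leq (esym (size_map f s))).
by apply: uniq_perm => // x; rewrite sfs.
Qed.
Arguments big_uniq_bij_in {R idx op T s} f {F}.

Section FsetDisjointUnion.
Local Open Scope fset_scope.
Variables (K : choiceType) (X Y : {fset K}).
Hypothesis dXY : [disjoint X & Y].

Lemma fsetUIl_disjoint S1 S2 : S1 `<=` X -> S2 `<=` Y -> (S1 `|` S2) `&` X = S1.
Proof.
move=> S1X S2Y; rewrite fsetIUl (fsetIidPl S1X).
have /eqP -> : S2 `&` X == fset0.
  by rewrite fsetI_eq0 (fdisjointWl S2Y) // fdisjoint_sym.
exact: fsetU0.
Qed.

Lemma fsetUIr_disjoint S1 S2 : S1 `<=` X -> S2 `<=` Y -> (S1 `|` S2) `&` Y = S2.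
Proof.
move=> S1X S2Y; rewrite fsetIUl (fsetIidPl S2Y).
have /eqP -> : S1 `&` Y == fset0 by rewrite fsetI_eq0 (fdisjointWl S1X).
exact: fset0U.
Qed.

Lemma in_fsetU_disjointl S1 S2 i : S1 `<=` X -> S2 `<=` Y ->
  i \in X -> (i \in S1 `|` S2) = (i \in S1).
Proof.
by move=> S1X S2Y iX; rewrite -{2}(fsetUIl_disjoint S1X S2Y) in_fsetI iX andbT.
Qed.

Lemma in_fsetU_disjointr S1 S2 i : S1 `<=` X -> S2 `<=` Y ->
  i \in Y -> (i \in S1 `|` S2) = (i \in S2).
Proof.
by move=> S1X S2Y iY; rewrite -{2}(fsetUIr_disjoint S1X S2Y) in_fsetI iY andbT.
Qed.

Lemma perm_fsetU_disjoint : perm_eq (X `|` Y) (enum_fset X ++ enum_fset Y).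
Proof.
apply: uniq_perm; first exact: fset_uniq.
  rewrite cat_uniq !fset_uniq /= andbT; apply/hasPn => i iY /=.
  by apply/negP => /(fdisjointP dXY); rewrite iY.
by move=> i; rewrite mem_cat in_fsetU.
Qed.

Lemma big_fpowersetU_disjoint (R : Type) (idx : R) (op : Monoid.com_law idx)
    (F : {fset K} -> R) :
  \big[op/idx]_(S <- fpowerset (X `|` Y)) F S =
  \big[op/idx]_(S1 <- fpowerset X) \big[op/idx]_(S2 <- fpowerset Y) F (S1 `|` S2).
Proof.
rewrite -(big_allpairs_dep (h := fun S1 S2 : {fset K} => S1 `|` S2)).
apply: perm_big; apply: uniq_perm; first exact: fset_uniq.
  apply: allpairs_uniq; try exact: fset_uniq.
  move=> [S1 S2] [T1 T2] /allpairsP[[A1 A2] /= [A1X A2Y [-> ->]]].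
  move=> /allpairsP[[B1 B2] /= [B1X B2Y [-> ->]]] /= AB.
  move: A1X A2Y B1X B2Y; rewrite !fpowersetE => A1X A2Y B1X B2Y.
  congr pair.
    by rewrite -(fsetUIl_disjoint A1X A2Y) AB (fsetUIl_disjoint B1X B2Y).
  by rewrite -(fsetUIr_disjoint A1X A2Y) AB (fsetUIr_disjoint B1X B2Y).
move=> S; rewrite fpowersetE; apply/idP/allpairsP => [SXY|[[S1 S2] /= []]].
  exists (S `&` X, S `&` Y); rewrite !fpowersetE !fsubsetIr.
  by rewrite -fsetIUr (fsetIidPl SXY).
by rewrite !fpowersetE => S1X S2Y ->; apply: fsetUSS.
Qed.

End FsetDisjointUnion.

Section FsetImage.
Local Open Scope fset_scope.
Variables (K : choiceType) (V : {fset K}) (f g : K -> K).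
Hypothesis fK : {in V, cancel f g}.

Lemma imfset_sub S : {in V, forall i, f i \in V} -> S `<=` V -> f @` S `<=` V.
Proof.
move=> fV /fsubsetP SV; apply/fsubsetP => k /imfsetP[j /= jS ->].
exact/fV/SV.
Qed.

Lemma imfsetK_in S : S `<=` V -> g @` (f @` S) = S.
Proof.
move=> /fsubsetP SV; rewrite -imfset_comp -[RHS]imfset_id.
by apply: eq_in_imfset => i /SV /fK.
Qed.

Lemma mem_imfset_can S i : S `<=` V -> i \in V -> (f i \in f @` S) = (i \in S).
Proof.
move=> SV iV; apply/idP/idP => [fiS|]; last exact: in_imfset.
by rewrite -(imfsetK_in SV) -(fK iV) in_imfset.
Qed.

End FsetImage.

(** * Weighted model counting *)

Section WeightedModelCount.
Variable R : realType.
Implicit Types (p q : nat -> R) (V X Y S : {fset nat}) (a b : form).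

Definition weight V S p : R :=
  \prod_(i <- V) (if i \in S then p i else 1 - p i).

Lemma wmcE V a p :
  wmc V a p = \sum_(S <- fpowerset V | eval (ind S) a) weight V S p.
Proof.
apply: eq_bigr => S _; rewrite /weight [in RHS](bigID (ind S)) /=.
by congr (_ * _); apply: eq_bigr => i; [move=> -> | move=> /negbTE ->].
Qed.

Lemma wmc_models V a p : wmc V a p = \sum_(S <- models V a) weight V S p.
Proof. by rewrite wmcE big_filter. Qed.

Lemma eq_wmc V a b p : eval^~ a =1 eval^~ b -> wmc V a p = wmc V b p.
Proof. by move=> ab; rewrite !wmcE; apply: eq_bigl => S; rewrite ab. Qed.

Lemma eq_wmc_in V a p q : {in V, p =1 q} -> wmc V a p = wmc V a q.
Proof.
move=> pq; rewrite !wmcE; apply: eq_bigr => S _; rewrite /weight !big_seq.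
by apply: eq_bigr => i /pq ->.
Qed.

Lemma weight_ge0 V S p : unit_vec V p -> 0 <= weight V S p.
Proof.
move=> up; rewrite /weight big_seq; apply: prodr_ge0 => i /up /andP[p0 p1].
by case: (i \in S); rewrite ?subr_ge0.
Qed.

Lemma wmc_ge0 V a p : unit_vec V p -> 0 <= wmc V a p.
Proof. by move=> up; rewrite wmcE; apply: sumr_ge0 => S _; apply: weight_ge0. Qed.

Lemma le_wmc V a b p : unit_vec V p -> entails a b -> wmc V a p <= wmc V b p.
Proof.
move=> up ab; rewrite !wmcE [X in X <= _]big_mkcond [X in _ <= X]big_mkcond.
apply: ler_sum => S _; case Ea: (eval _ a); first by rewrite (ab _ Ea).
by case: (eval _ b) => //; apply: weight_ge0.
Qed.

Lemma wmcOr V a b p : (forall x, ~~ (eval x a && eval x b)) ->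
  wmc V (Or a b) p = wmc V a p + wmc V b p.
Proof.
move=> dab; rewrite !wmcE !(big_mkcond (fun S => eval _ _)) -big_split /=.
apply: eq_bigr => S _; have := dab (ind S).
by case: (eval _ a); case: (eval _ b); rewrite /= ?addr0 ?add0r.
Qed.

Section DisjointUnion.
Local Open Scope fset_scope.
Variables (X Y : {fset nat}) (p q : nat -> R).
Hypothesis dXY : [disjoint X & Y].
Let pq := fun i => if i \in X then p i else q i.

Lemma weightU S1 S2 : S1 `<=` X -> S2 `<=` Y ->
  weight (X `|` Y) (S1 `|` S2) pq = weight X S1 p * weight Y S2 q.
Proof.
move=> S1X S2Y; rewrite /weight (perm_big _ (perm_fsetU_disjoint dXY)) big_cat /=.
congr (_ * _); rewrite big_seq [in RHS]big_seq; apply: eq_bigr => i iXY.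
  by rewrite /pq iXY (in_fsetU_disjointl dXY S1X S2Y iXY).
have iNX : i \notin X by apply/negP => /(fdisjointP dXY); rewrite iXY.
by rewrite /pq (negbTE iNX) (in_fsetU_disjointr dXY S1X S2Y iXY).
Qed.

Lemma wmcAnd a b : over X a -> over Y b ->
  wmc (X `|` Y) (And a b) pq = wmc X a p * wmc Y b q.
Proof.
move=> oa ob; rewrite !wmcE big_mkcond big_fpowersetU_disjoint //.
rewrite [in RHS]big_mkcond [X in _ = _ * X]big_mkcond big_distrl /=.
apply: eq_big_seq => S1; rewrite fpowersetE => S1X; rewrite big_distrr /=.
apply: eq_big_seq => S2; rewrite fpowersetE => S2Y.
rewrite (eval_over (y := ind S1) oa); last first.
  by move=> i /(in_fsetU_disjointl dXY S1X S2Y) ->.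
rewrite (eval_over (y := ind S2) ob); last first.
  by move=> i /(in_fsetU_disjointr dXY S1X S2Y) ->.
rewrite weightU //.
by case: (eval _ a); case: (eval _ b); rewrite ?mulr0 ?mul0r.
Qed.

End DisjointUnion.

Lemma wmc_fset1 i a p : wmc [fset i]%fset a p =
  (if eval (ind fset0) a then 1 - p i else 0) +
  (if eval (ind [fset i]%fset) a then p i else 0).
Proof.
rewrite wmcE big_mkcond fpowerset1 big_fsetU1 ?big_seq_fset1 /=.
  by rewrite /weight !big_seq_fset1 in_fset1 eqxx.
by rewrite in_fset1 eq_sym -cardfs_eq0 cardfs1.
Qed.

Lemma wmcT V p : wmc V Tru p = 1.
Proof.
elim/fset1U_rect: V => [|i V iNV IH].
  by rewrite wmcE fpowerset0 big_seq_fset1 /weight big_seq_fset0.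
have d : [disjoint [fset i] & V]%fset by rewrite fdisjoint1X.
have -> : p = fun j => if j \in [fset i]%fset then p j else p j.
  by apply: funext => j; rewrite if_same.
by rewrite (@eq_wmc _ _ (And Tru Tru)) // wmcAnd // IH mulr1 wmc_fset1 /= subrK.
Qed.

Lemma wmc_Var i p : wmc [fset i]%fset (Var i) p = p i.
Proof. by rewrite wmc_fset1 /= in_fset1 eqxx add0r. Qed.

Lemma wmc_NegVar i p : wmc [fset i]%fset (Neg (Var i)) p = 1 - p i.
Proof. by rewrite wmc_fset1 /= in_fset1 eqxx addr0. Qed.

Lemma wmc_state_sent V (x : nat -> bool) :
  wmc V (state_sent V x) (state_vec R x) = 1.
Proof.
set S0 := [fset i in V | x i]%fset.
have S0V : (S0 `<=` V)%fset by apply/fsubsetP => i; rewrite !inE => /andP[].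
have xS0 : state_sent V x = state_sent V (ind S0).
  by apply: eq_in_conj_literals => i iV; rewrite !inE iV.
rewrite wmcE big_mkcond (bigD1_seq S0) ?fset_uniq ?fpowersetE //= big1_seq ?addr0.
  rewrite xS0 eval_state_sent_self /weight big_seq big1 // => i iV.
  by rewrite !inE iV /state_vec; case: (x i); rewrite ?subrr ?subr0.
move=> S /andP[SS0 SV]; case: ifP => // xS; rewrite xS0 in xS.
move: SV; rewrite fpowersetE => SV.
by rewrite (eq_state_sent S0V SV xS (eval_state_sent_self _ _)) eqxx in SS0.
Qed.

Lemma wmc_negvars V a p : over V a ->
  wmc V (negvars a) (fun i => 1 - p i) = wmc V a p.
Proof.
move=> oa; rewrite !wmcE !(big_mkcond (fun S => eval _ _)) /=.
rewrite [LHS](big_uniq_bij_in (fun S => V `\` S)%fset) ?fset_uniq //; last first.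
- move=> S T; rewrite !fpowersetE => SV TV eqST.
  by rewrite -(fsetDK SV) -(fsetDK TV) eqST.
- by move=> S _; rewrite fpowersetE fsubsetDl.
apply: eq_big_seq => S; rewrite fpowersetE => SV.
rewrite eval_negvars (eval_over (y := ind S) oa); last first.
  by move=> i iV; rewrite in_fsetD iV andbT negbK.
congr (if _ then _ else _); rewrite /weight !big_seq; apply: eq_bigr => i iV.
by rewrite in_fsetD iV /=; case: (i \in S); rewrite ?subKr.
Qed.

Lemma wmc_rename V a p (pi sigma : nat -> nat) :
  {in V, forall i, pi i \in V} -> {in V, cancel pi sigma} -> over V a ->
  wmc V (rename pi a) (fun j => p (sigma j)) = wmc V a p.
Proof.
move=> piV piK oa; rewrite !wmcE !(big_mkcond (fun S => eval _ _)) /=.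
rewrite [LHS](big_uniq_bij_in (fun S => pi @` S)%fset) ?fset_uniq //; last first.
- move=> S T; rewrite !fpowersetE => SV TV eqST.
  by rewrite -(imfsetK_in piK SV) -(imfsetK_in piK TV) eqST.
- by move=> S; rewrite !fpowersetE; apply: imfset_sub.
apply: eq_big_seq => S; rewrite fpowersetE => SV.
rewrite eval_rename (eval_over (y := ind S) oa); last first.
  by move=> i iV /=; rewrite (mem_imfset_can piK SV iV).
congr (if _ then _ else _); rewrite /weight [LHS](big_uniq_bij_in pi) ?fset_uniq //.
  by rewrite !big_seq; apply: eq_bigr => i iV; rewrite (mem_imfset_can piK SV iV) piK.
exact: can_in_inj piK.
Qed.

End WeightedModelCount.

(** * The semantic loss satisfies the axioms *)

Section LogScale.
Variable R : realType.
Local Open Scope ereal_scope.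

Lemma cnlogE (c w : R) : (0 < c)%R ->
  c%:E * nlog w = if w == 0%R then +oo else (c * - ln w)%:E.
Proof. by move=> c0; rewrite /nlog; case: eqP => _ //; rewrite gt0_muley ?lte_fin. Qed.

Lemma cnlog_neq_ninfty (c w : R) : (0 < c)%R -> c%:E * nlog w != -oo.
Proof. by move=> c0; rewrite cnlogE //; case: (w == 0%R). Qed.

Lemma cnlog1 (c : R) : (0 < c)%R -> c%:E * nlog 1 = 0.
Proof. by move=> c0; rewrite cnlogE // oner_eq0 ln1 oppr0 mulr0. Qed.

Lemma cnlogM (c u v : R) : (0 < c)%R -> (0 <= u)%R -> (0 <= v)%R ->
  c%:E * nlog (u * v) = c%:E * nlog u + c%:E * nlog v.
Proof.
move=> c0 u0 v0; rewrite !cnlogE //.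
have [->|un0] := eqVneq u 0%R; first by rewrite mul0r eqxx; case: eqP.
have [->|vn0] := eqVneq v 0%R; first by rewrite mulr0 eqxx.
rewrite mulf_eq0 (negbTE un0) (negbTE vn0) /= -EFinD lnM ?posrE ?lt0r ?un0 ?vn0 //.
by congr EFin; ring.
Qed.

Lemma cnlog_le (c u v : R) : (0 < c)%R -> (0 <= u)%R -> (u <= v)%R ->
  c%:E * nlog v <= c%:E * nlog u.
Proof.
move=> c0 u0 uv; rewrite !cnlogE //.
have [_|un0] := eqVneq u 0%R; first by rewrite leey.
have up : (0 < u)%R by rewrite lt0r un0.
have vp : (0 < v)%R by apply: lt_le_trans uv.
by rewrite gt_eqF // lee_fin ler_pM2l // lerN2 ler_ln.
Qed.

Lemma epowE (K r : R) : (0 < K)%R -> epow K r%:E = expR (- r * ln K).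
Proof. by move=> K0; rewrite /epow /powR (gt_eqF K0). Qed.

Lemma epow0 (K : R) : (0 < K)%R -> epow K 0 = 1%R.
Proof. by move=> K0; rewrite epowE // oppr0 mul0r expR0. Qed.

Lemma epowD (K : R) (x y : \bar R) : (0 < K)%R -> x != -oo -> y != -oo ->
  epow K (x + y) = (epow K x * epow K y)%R.
Proof.
move=> K0; case: x => [r||] //; case: y => [s||] // _ _; rewrite ?mul0r ?mulr0 //.
by rewrite -EFinD !epowE // -expRD; congr expR; lra.
Qed.

Lemma epow_cnlog (K c w : R) : (0 < K)%R -> (0 < c)%R -> (c * ln K = 1)%R ->
  (0 <= w)%R -> epow K (c%:E * nlog w) = w.
Proof.
move=> K0 c0 cK w0; rewrite cnlogE //; case: eqP => [-> //|/eqP wn0].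
rewrite epowE // -[RHS]lnK ?posrE ?lt0r ?wn0 //.
by congr expR; transitivity (ln w * (c * ln K))%R; [ring | rewrite cK mulr1].
Qed.

End LogScale.

Lemma Lsem_loss_axioms (R : realType) (c : R) : 0 < c ->
  is_loss (Lsem c) /\ axioms (Lsem c).
Proof.
move=> c0; split; first split.
- by move=> V a p _; apply: cnlog_neq_ninfty.
- by move=> V a p q _ _ pq; rewrite /Lsem (eq_wmc_in a pq).
rewrite /axioms /Lsem.
split; [|split; [|split; [|split; [|split; [|split; [|split]]]]]].
- by move=> V p _; rewrite wmcT cnlog1.
- by move=> X Y a b p q dXY [oa up] [ob uq]; rewrite wmcAnd // cnlogM // wmc_ge0.
- by move=> V a b p [oa up] ob ab; rewrite cnlog_le ?wmc_ge0 ?le_wmc.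
- by move=> V x; rewrite wmc_state_sent cnlog1.
- by move=> i; exists c, c => p _; rewrite wmc_Var wmc_NegVar.
- by move=> V a p [oa up]; rewrite wmc_negvars.
- by move=> V a p pi sigma piV _ piK _ [oa up]; rewrite wmc_rename.
exists (expR c^-1); split; first exact: expR_gt0.
have cK : c * ln (expR c^-1) = 1 by rewrite expRK divff ?gt_eqF.
move=> V a b p [oa up] ob dab.
by rewrite wmcOr // !epow_cnlog ?expR_gt0 ?addr_ge0 ?wmc_ge0.
Qed.

(** * Uniqueness *)

Section Converse.
Variables (R : realType) (L : lossT R).
Hypothesis L_neq_ninfty : forall V a p, valid V a p -> L V a p != -oo%E.
Hypotheses (LA1 : A1 L) (LA2 : A2 L) (LA3 : A3 L) (LA5 : A5 L) (LA6 : A6 L).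
Variable K : R.
Hypothesis K_gt0 : 0 < K.
Hypothesis LA8 : forall V a b p, valid V a p -> over V b ->
  (forall x : nat -> bool, ~~ (eval x a && eval x b)) ->
  epow K (L V (Or a b) p) = epow K (L V a p) + epow K (L V b p).

Lemma loss_equiv V a b p : over V a -> over V b -> unit_vec V p ->
  eval^~ a =1 eval^~ b -> L V a p = L V b p.
Proof.
move=> oa ob up ab; apply/eqP; rewrite eq_le.
by apply/andP; split; apply: LA3 => // x; rewrite ab.
Qed.

Lemma epow_loss_Fls V p : unit_vec V p -> epow K (L V Fls p) = 0.
Proof.
move=> up; have oF : over V Fls by [].
have := LA8 (conj oF up) oF (fun=> erefl).
rewrite (@loss_equiv V (Or Fls Fls) Fls) //; lra.
Qed.

(* At [p = 1/2] both literals of [X] have probability [1/2]: (A6) then forces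
   [c = c'], and (A8) applied to [true = X \/ ~X] forces [2 * 2^(-c ln K) = 1]. *)
Section LiteralConstants.
Variables (i : nat) (c c' : R).
Hypothesis Lc : forall p : nat -> R, 0 <= p i <= 1 ->
  L [fset i]%fset (Var i) p = (c%:E * nlog (p i))%E /\
  L [fset i]%fset (Neg (Var i)) p = (c'%:E * nlog (1 - p i))%E.

Let half : nat -> R := fun=> 2^-1.

Let half_unit : unit_vec [fset i]%fset half.
Proof. by move=> j _; rewrite /half; apply/andP; split; lra. Qed.

Let one_sub_half : (fun j => 1 - half j) = half.
Proof. by apply: funext => j; rewrite /half; lra. Qed.

Let ln2_gt0 : 0 < ln (2 : R).
Proof. by apply: ln_gt0; lra. Qed.

Let nlog_half : nlog (2^-1 : R) = (ln 2)%:E.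
Proof. by rewrite /nlog invr_eq0 pnatr_eq0 /= lnV ?opprK // posrE. Qed.

Let L_Var_half : L [fset i]%fset (Var i) half = (c * ln 2)%:E.
Proof. by rewrite (Lc (half_unit (fset11 i))).1 nlog_half. Qed.

Let L_Neg_half : L [fset i]%fset (Neg (Var i)) half = (c' * ln 2)%:E.
Proof.
rewrite (Lc (half_unit (fset11 i))).2 (_ : 1 - half i = 2^-1) ?nlog_half //.
by rewrite /half; lra.
Qed.

Let over_Var : over [fset i]%fset (Var i).
Proof. by move=> j; rewrite inE => /eqP ->; rewrite fset11. Qed.

Lemma literal_consts_eq : c = c'.
Proof.
have := LA6 (conj over_Var half_unit); rewrite /= one_sub_half.
rewrite L_Var_half L_Neg_half => -[]; apply: mulIf.
exact: lt0r_neq0 ln2_gt0.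
Qed.

Lemma literal_const_lnK : c * ln K = 1.
Proof.
have Lor : L [fset i]%fset (Or (Var i) (Neg (Var i))) half = 0.
  have oOr : over [fset i]%fset (Or (Var i) (Neg (Var i))).
    by move=> j; rewrite /= !inE orbb.
  by rewrite -(LA1 half_unit); apply: loss_equiv => // x; rewrite /= orbN.
have oN : over [fset i]%fset (Neg (Var i)) := over_Var.
have := LA8 (conj over_Var half_unit) oN (fun x => negbT (andbN (x i))).
rewrite Lor epow0 // L_Var_half L_Neg_half -literal_consts_eq !epowE // => half_eq.
have : - (c * ln 2) * ln K = ln (2^-1 : R).
  by rewrite -[LHS]expRK; congr ln; lra.
rewrite lnV ?posrE // => ln_eq.
by apply: (mulIf (lt0r_neq0 ln2_gt0)); rewrite mul1r; lra.
Qed.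

Lemma literal_const_gt0 : 0 < c.
Proof.
have oT : over [fset i]%fset Tru by [].
have := LA3 (conj over_Var half_unit) oT (fun x _ => erefl).
rewrite LA1 // L_Var_half lee_fin pmulr_lge0 // le_eqVlt => /orP[/eqP c0|//].
by move: literal_const_lnK; rewrite -c0 mul0r => /eqP; rewrite eq_sym oner_eq0.
Qed.

End LiteralConstants.

Lemma literal_const i : exists c : R, [/\ 0 < c, c * ln K = 1 &
  forall p : nat -> R, 0 <= p i <= 1 ->
    L [fset i]%fset (Var i) p = (c%:E * nlog (p i))%E /\
    L [fset i]%fset (Neg (Var i)) p = (c%:E * nlog (1 - p i))%E].
Proof.
have [c [c' Lc]] := LA5 i; have cc' := literal_consts_eq Lc; subst c'.
by exists c; split; [exact: literal_const_gt0 Lc | exact: literal_const_lnK Lc |].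
Qed.

Lemma epow_loss_literal i (p : nat -> R) (b : bool) : 0 <= p i <= 1 ->
  epow K (L [fset i]%fset (if b then Var i else Neg (Var i)) p) =
  if b then p i else 1 - p i.
Proof.
move=> pi01; have [c [c_gt0 cK Lc]] := literal_const i.
have [LV LN] := Lc p pi01; case/andP: pi01 => p0 p1.
by case: b; rewrite ?LV ?LN epow_cnlog // subr_ge0.
Qed.

Lemma epow_loss_conj_literals (l : seq nat) (W : {fset nat}) x p :
  uniq l -> W =i l -> unit_vec W p ->
  epow K (L W (conj_literals l x) p) = \prod_(i <- l) (if x i then p i else 1 - p i).
Proof.
elim: l W => [|i l IH] W ul Wl up.
  have W0 : W = fset0 by apply/fsetP => j; rewrite Wl in_fset0.
  by rewrite big_nil LA1 ?epow0 // -W0.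
move: ul => /= /andP[il ul].
set W' := seq_fset tt l; have W'l : W' =i l := seq_fsetE _ _.
have WE : W = ([fset i] `|` W')%fset.
  by apply/fsetP => j; rewrite Wl in_fsetU in_fset1 W'l inE.
have dW : [disjoint [fset i] & W']%fset by rewrite fdisjoint1X W'l.
have ui : unit_vec [fset i]%fset p.
  by move=> j; rewrite in_fset1 => /eqP ->; apply: up; rewrite Wl mem_head.
have uW' : unit_vec W' p.
  by move=> j; rewrite W'l => jl; apply: up; rewrite Wl inE jl orbT.
have oi : over [fset i]%fset (if x i then Var i else Neg (Var i)).
  by case: (x i) => j /=; rewrite inE => /eqP ->; rewrite fset11.
have ol : over W' (conj_literals l x).
  by move=> j /vars_conj_literals; rewrite W'l.
have := LA2 dW (conj oi ui) (conj ol uW').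
have -> : (fun j => if j \in [fset i]%fset then p j else p j) = p.
  by apply: funext => j; rewrite if_same.
rewrite -WE /= => ->; rewrite epowD ?L_neq_ninfty //.
by rewrite epow_loss_literal ?(ui _ (fset11 i)) // (IH W') // big_cons.
Qed.

Lemma epow_loss_state V S p : unit_vec V p ->
  epow K (L V (state_sent V (ind S)) p) = weight V S p.
Proof. by move=> up; rewrite state_sentE (epow_loss_conj_literals _ (fset_uniq V)). Qed.

Lemma epow_loss_big_or_states V p (s : seq {fset nat}) :
  unit_vec V p -> uniq s -> all (fun S => S `<=` V)%fset s ->
  epow K (L V (big_or [seq state_sent V (ind M) | M <- s]) p) =
  \sum_(S <- s) weight V S p.
Proof.
move=> up; elim: s => [|S s IH] /=; first by rewrite big_nil epow_loss_Fls.
move=> /andP[Ss us] /andP[SV sV].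
rewrite LA8 ?big_cons ?epow_loss_state ?IH //.
- by split=> //; apply: over_state_sent.
- by apply: over_big_or_map => T; apply: over_state_sent.
move=> x; apply/andP => -[xS]; rewrite eval_big_or has_map => /hasP[T Ts xT].
move/allP: sV => /(_ T Ts) TV.
by move: Ss; rewrite (eq_state_sent SV TV xS xT) Ts.
Qed.

Lemma epow_loss_wmc V a p : valid V a p -> epow K (L V a p) = wmc V a p.
Proof.
move=> [oa up].
rewrite (loss_equiv oa (@over_dnf V a) up (fun x => esym (eval_dnf x oa))).
rewrite epow_loss_big_or_states ?wmc_models ?filter_uniq ?fset_uniq //.
by apply/allP => S; rewrite mem_filter fpowersetE => /andP[].
Qed.

Lemma loss_eq_Lsem : exists c : R, 0 < c /\
  forall V a p, valid V a p -> L V a p = Lsem c V a p.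
Proof.
(* Any variable would do: [c ln K = 1] determines [c]. *)
have [c [c_gt0 cK _]] := literal_const 0.
exists c; split => // V a p vp.
have := epow_loss_wmc vp; have := L_neq_ninfty vp.
rewrite /Lsem cnlogE //; case: (L V a p) => [r _|_ /= <-|//]; last by rewrite eqxx.
rewrite epowE // => <-; rewrite gt_eqF ?expR_gt0 // expRK; congr EFin.
by transitivity (r * (c * ln K)); [rewrite cK mulr1 | ring].
Qed.

End Converse.

Theorem theorem1 (R : realType) :
  (forall c : R, 0 < c -> is_loss (Lsem c) /\ axioms (Lsem c)) /\
  (forall L : lossT R, is_loss L -> axioms L ->
     exists c : R, 0 < c /\
       forall V a p, valid V a p -> L V a p = Lsem c V a p).
Proof.
split; first exact: Lsem_loss_axioms.
move=> L [L_neq_ninfty _] [LA1 [LA2 [LA3 [_ [LA5 [LA6 [_ [K [K_gt0 LA8]]]]]]]]].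
exact: (loss_eq_Lsem L_neq_ninfty LA1 LA2 LA3 LA5 LA6 K_gt0 LA8).
Qed.
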